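(* Let $G$ be a finite simple graph which has a perfect matching. Then Dom has a winning strategy in the Bicolored Domination Game on $G$, both in the Sepy-start and in the Dom-start version.
   Context: For a vertex $v$ of a graph $G$, $N[v]$ denotes its closed neighborhood. The Bicolored Domination Game on an isolate-free graph $G$ is played by Dom and Sepy, who alternately color vertices; Dom may only use color $p$ and Sepy may only use color $b$. $V_p,V_b$ denote the current sets of vertices of each color. A player with color $c$ makes a move by choosing a vertex $v$ such that (i) $v$ is uncolored and (ii) there exists $u\in N[v]$ with $N[u]\cap V_c=\emptyset$ (before the move); then $v$ gets color $c$. The game terminates as soon as one of the following holds: (s* ) some vertex $v$ has $N[v]\subseteq V_p$ or $N[v]\subseteq V_b$ — Sepy wins; (d** ) for some $c\in\{p,b\}$, $V_c$ dominates all vertices of $G$ and no vertex $v$ satisfies $N[v]\subseteq V_c$ — Dom wins. In the Dom-start (Sepy-start) version Dom (Sepy) moves first. *)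

From mathcomp Require Import all_boot.
Set Implicit Arguments. Unset Strict Implicit. Unset Printing Implicit Defensive.

Definition simple_graph (T : finType) (e : rel T) : Prop :=
  symmetric e /\ irreflexive e.

Definition cnbh (T : finType) (e : rel T) (v : T) : {set T} :=
  [set u | (u == v) || e v u].

Definition perfect_matching (T : finType) (e : rel T) (M : {set {set T}}) : Prop :=
  [/\ forall E, E \in M -> exists x y, e x y /\ E = [set x; y],
      trivIset M & cover M = [set: T]].

Definition has_perfect_matching (T : finType) (e : rel T) : Prop :=
  exists M, perfect_matching e M.

(* Players / colours: Dom uses colour p, Sepy uses colour b. *)
Inductive player := Dom | Sepy.

Definition other (c : player) := if c is Dom then Sepy else Dom.

Section Game.
Variables (T : finType) (e : rel T).

Local Notation N := (cnbh e).

Definition col (c : player) (Vp Vb : {set T}) : {set T} :=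
  if c is Dom then Vp else Vb.

Definition sepy_term (Vp Vb : {set T}) : bool :=
  [exists v, (N v \subset Vp) || (N v \subset Vb)].

Definition dominates_all (V : {set T}) : bool :=
  [forall v, N v :&: V != set0].

Definition dom_term (Vp Vb : {set T}) : bool :=
  [exists c : bool,
     let V := if c then Vp else Vb in
     dominates_all V && [forall v, ~~ (N v \subset V)]].

Definition legal (c : player) (Vp Vb : {set T}) (v : T) : bool :=
  (v \notin Vp) && (v \notin Vb) &&
  [exists u in N v, N u :&: col c Vp Vb == set0].

(* The game terminates as soon as (s-star) or (d-star-star) holds
   (these are in fact mutually exclusive; (s-star) is checked first).  Since
   every move colours a new vertex, the game is finite and this inductive
   (least fixed point) definition is exactly "Dom has a winning strategy". *)
Inductive dom_wins : player -> {set T} -> {set T} -> Prop :=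
  | dw_term c Vp Vb :
      ~~ sepy_term Vp Vb -> dom_term Vp Vb -> dom_wins c Vp Vb
  | dw_dom Vp Vb v :
      ~~ sepy_term Vp Vb -> ~~ dom_term Vp Vb -> legal Dom Vp Vb v ->
      dom_wins Sepy (v |: Vp) Vb -> dom_wins Dom Vp Vb
  | dw_sepy Vp Vb :
      ~~ sepy_term Vp Vb -> ~~ dom_term Vp Vb ->
      (exists v, legal Sepy Vp Vb v) ->
      (forall v, legal Sepy Vp Vb v -> dom_wins Dom Vp (v |: Vb)) ->
      dom_wins Sepy Vp Vb.

End Game.

From mathcomp Require Import all_boot.
Set Implicit Arguments. Unset Strict Implicit. Unset Printing Implicit Defensive.

(* Let m be the partner map of the perfect matching.  Dom keeps three
   invariants: Dom's and Sepy's vertices are disjoint, no matched pair is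
   entirely Dom's, and every Sepy vertex whose partner is not Dom's is, like
   its partner, dominated by Dom's vertices.  Then no closed neighbourhood is
   monochromatic (it contains a matched pair), so Sepy never wins.  On his turn
   Dom colours a vertex not yet dominated by his colour; if there is none he
   has already won.  After a Sepy move at v that breaks the last invariant, Dom
   answers at the partner of v instead.  The game is finite, so Dom wins. *)

Section PairingStrategy.
Variables (T : finType) (e : rel T) (m : T -> T).
Hypotheses (e_sym : symmetric e) (e_irr : irreflexive e)
  (e_partner : forall x, e x (m x)) (partnerK : involutive m).

Local Notation N := (cnbh e).

Lemma mem_cnbh x y : (y \in N x) = (y == x) || e x y.
Proof. by rewrite inE. Qed.

Lemma cnbh_id x : x \in N x.
Proof. by rewrite mem_cnbh eqxx. Qed.

Lemma cnbh_partner x : m x \in N x.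
Proof. by rewrite mem_cnbh e_partner orbT. Qed.

Lemma cnbh_sym x y : y \in N x -> x \in N y.
Proof. by rewrite !mem_cnbh eq_sym e_sym. Qed.

Lemma partner_neq x : m x != x.
Proof. by apply: contraTneq (e_partner x) => ->; rewrite e_irr. Qed.

Definition dominated (V : {set T}) x := N x :&: V != set0.

Lemma dominatedP (V : {set T}) x :
  reflect (exists2 y, y \in N x & y \in V) (dominated V x).
Proof.
apply: (iffP (set0Pn _)) => [[y /setIP[]]|[y xy yV]]; first by exists y.
by exists y; rewrite inE xy.
Qed.

Lemma dominatedS (V W : {set T}) x : V \subset W -> dominated V x -> dominated W x.
Proof. by move=> /subsetP VW /dominatedP[y xy /VW yW]; apply/dominatedP; exists y. Qed.

Lemma dominated_in (V : {set T}) x y : y \in N x -> y \in V -> dominated V x.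
Proof. by move=> xy yV; apply/dominatedP; exists y. Qed.

Record strategy_inv (Vp Vb : {set T}) : Prop := StrategyInv {
  inv_disjoint : forall x, x \in Vp -> x \notin Vb;
  inv_pair : forall x, x \in Vp -> m x \notin Vp;
  inv_blue : forall x, x \in Vb -> m x \notin Vp ->
               dominated Vp x && dominated Vp (m x) }.

Lemma not_sepy_term (Vp Vb : {set T}) :
  (forall x, x \in Vp -> x \notin Vb) ->
  (forall x, x \in Vp -> m x \notin Vp) ->
  (forall x, x \in Vb -> m x \in Vb -> dominated Vp x) ->
  ~~ sepy_term e Vp Vb.
Proof.
move=> disj pair blue; apply/existsPn => x; apply/negP => /orP[] /subsetP sub.
  by move: (pair x (sub x (cnbh_id x))); rewrite sub ?cnbh_partner.
case/dominatedP: (blue x (sub x (cnbh_id x)) (sub _ (cnbh_partner x))) => y.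
by move=> /sub yb /disj; rewrite yb.
Qed.

Lemma inv_not_sepy_term (Vp Vb : {set T}) :
  strategy_inv Vp Vb -> ~~ sepy_term e Vp Vb.
Proof.
case=> disj pair blue; apply: not_sepy_term => // x xb mxb.
have mxp : m x \notin Vp by apply: contraL mxb => /disj.
by case/andP: (blue x xb mxp).
Qed.

Lemma dominates_all_dom_term (Vp Vb : {set T}) (c : bool) :
  ~~ sepy_term e Vp Vb -> dominates_all e (if c then Vp else Vb) ->
  dom_term e Vp Vb.
Proof.
move=> nsepy dom_all; apply/existsP; exists c; apply/andP; split => //.
apply/forallP => v; apply: contra nsepy => sub; apply/existsP; exists v.
by case: c sub {dom_all} => ->; rewrite ?orbT.
Qed.

Lemma exists_undominated (Vp Vb : {set T}) :
  ~~ sepy_term e Vp Vb -> ~~ dom_term e Vp Vb -> exists u, ~~ dominated Vp u.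
Proof.
move=> nsepy ndom; apply/existsP; apply: contraNT ndom => /existsPn undom.
apply: (@dominates_all_dom_term _ _ true) => //.
by apply/forallP => u; have := undom u; rewrite negbK.
Qed.

(* Without a legal Sepy move, every closed neighbourhood either meets V_b, so
   that V_b dominates and Dom has already won, or lies inside V_p, so that Sepy
   has already won. *)
Lemma sepy_has_move (Vp Vb : {set T}) :
  ~~ sepy_term e Vp Vb -> ~~ dom_term e Vp Vb -> exists v, legal e Sepy Vp Vb v.
Proof.
move=> nsepy ndom; apply/existsP; apply: contraNT ndom => /existsPn nolegal.
apply: (@dominates_all_dom_term _ _ false) => //.
apply/forallP => u; apply/negP => /eqP Nu_b.
have [/existsP[x /andP[xu xNp]] | /existsPn allp] :=
  boolP [exists x in N u, x \notin Vp].
  have xNb : x \notin Vb.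
    by apply/negP => xb; have := in_setI x (N u) Vb; rewrite Nu_b inE xu xb.
  move: (nolegal x); rewrite /legal xNp xNb /=; case/negP.
  by apply/existsP; exists u; rewrite cnbh_sym // Nu_b /=.
case/negP: nsepy; apply/existsP; exists u; apply/orP; left.
by apply/subsetP => x xu; move: (allp x); rewrite xu negbK.
Qed.

Lemma legal_uncoloured c (Vp Vb : {set T}) v :
  legal e c Vp Vb v -> v \notin Vp :|: Vb.
Proof. by case/andP => /andP[vp vb] _; rewrite inE negb_or vp vb. Qed.

Definition uncoloured (Vp Vb : {set T}) := #|~: (Vp :|: Vb)|.

Lemma card_setC_setU1 (X : {set T}) v : v \notin X -> #|~: (v |: X)| < #|~: X|.
Proof.
move=> vX; apply: proper_card; rewrite properE setCS subsetUr /=.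
by apply/subsetP => /(_ v); rewrite !inE eqxx vX => /(_ isT).
Qed.

Lemma uncoloured_setU1p (Vp Vb : {set T}) v :
  v \notin Vp :|: Vb -> uncoloured (v |: Vp) Vb < uncoloured Vp Vb.
Proof. by rewrite /uncoloured -setUA; apply: card_setC_setU1. Qed.

Lemma uncoloured_setU1b (Vp Vb : {set T}) v :
  v \notin Vp :|: Vb -> uncoloured Vp (v |: Vb) < uncoloured Vp Vb.
Proof. by rewrite /uncoloured setUCA; apply: card_setC_setU1. Qed.

Section DomMove.
Variables (Vp Vb : {set T}) (u : T).
Hypotheses (inv : strategy_inv Vp Vb) (undom : ~~ dominated Vp u).

Lemma undominated_notin_p : u \notin Vp.
Proof. exact: contra (dominated_in (cnbh_id u)) undom. Qed.

Lemma undominated_partner_notin_p : m u \notin Vp.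
Proof. exact: contra (dominated_in (cnbh_partner u)) undom. Qed.

Lemma undominated_legal : legal e Dom Vp Vb u.
Proof.
have ub : u \notin Vb.
  apply/negP => ub; move: (inv_blue inv ub undominated_partner_notin_p).
  by rewrite (negbTE undom).
rewrite /legal undominated_notin_p ub; apply/existsP; exists u.
by rewrite cnbh_id; move: undom; rewrite negbK.
Qed.

Lemma undominated_move_inv : strategy_inv (u |: Vp) Vb.
Proof.
have [disj pair blue] := inv; split.
- move=> x /setU1P[->|/disj //].
  by have := legal_uncoloured undominated_legal; rewrite inE negb_or => /andP[].
- move=> x /setU1P[->|xp]; rewrite in_setU1 negb_or.
    by rewrite partner_neq undominated_partner_notin_p.
  rewrite pair // andbT; apply: contraTneq xp => mx_u.
  by rewrite -(partnerK x) mx_u undominated_partner_notin_p.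
- move=> x xb; rewrite in_setU1 negb_or => /andP[_ /(blue x xb)] /andP[dx dmx].
  by rewrite !(dominatedS (subsetUr [set u] Vp)).
Qed.

End DomMove.

Lemma safe_sepy_move_inv (Vp Vb : {set T}) v :
  strategy_inv Vp Vb -> v \notin Vp ->
  (m v \in Vp) || (dominated Vp v && dominated Vp (m v)) ->
  strategy_inv Vp (v |: Vb).
Proof.
move=> [disj pair blue] vp safe; split => //.
- move=> x xp; rewrite in_setU1 negb_or disj // andbT.
  by apply: contraTneq xp => ->.
- by move=> x /setU1P[-> /negbTE mvp|]; [rewrite mvp in safe | apply: blue].
Qed.

(* A Sepy move at v is unsafe when it falsifies the third invariant; Dom then
   colours m v, which restores it. *)
Section UnsafeSepyMove.
Variables (Vp Vb : {set T}) (v : T).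
Hypotheses (inv : strategy_inv Vp Vb) (vp : v \notin Vp) (mvp : m v \notin Vp)
  (unsafe : ~~ (dominated Vp v && dominated Vp (m v))).

Lemma unsafe_partner_notin_b : m v \notin v |: Vb.
Proof.
rewrite in_setU1 negb_or partner_neq; apply/negP => mvb.
move: (inv_blue inv mvb); rewrite partnerK andbC => /(_ vp).
by rewrite (negbTE unsafe).
Qed.

Lemma unsafe_not_sepy_term : ~~ sepy_term e Vp (v |: Vb).
Proof.
have [disj pair blue] := inv.
apply: not_sepy_term => //.
  by move=> x xp; rewrite in_setU1 negb_or disj // andbT; apply: contraTneq xp => ->.
move=> x /setU1P[->|xb]; first by rewrite (negbTE unsafe_partner_notin_b).
case/setU1P => [mx_v | mxb].
  by move: unsafe_partner_notin_b; rewrite -mx_v partnerK in_setU1 xb orbT.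
have mxp : m x \notin Vp by apply: contraL mxb => /disj.
by case/andP: (blue x xb mxp).
Qed.

Lemma unsafe_reply_legal : legal e Dom Vp (v |: Vb) (m v).
Proof.
rewrite /legal mvp (negbTE unsafe_partner_notin_b) /=; apply/existsP.
have [dv | ndv] := boolP (dominated Vp v).
  by exists (m v); rewrite cnbh_id /=; move: unsafe; rewrite dv negbK.
by exists v; rewrite cnbh_sym ?cnbh_partner //=; move: ndv; rewrite negbK.
Qed.

Lemma unsafe_reply_inv : strategy_inv (m v |: Vp) (v |: Vb).
Proof.
have [disj pair blue] := inv; split.
- move=> x /setU1P[->|xp]; first exact: unsafe_partner_notin_b.
  by rewrite in_setU1 negb_or disj // andbT; apply: contraTneq xp => ->.
- move=> x /setU1P[->|xp]; rewrite in_setU1 negb_or.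
    by rewrite partnerK eq_sym partner_neq vp.
  rewrite pair // andbT; apply: contraTneq xp => mx_mv.
  by rewrite -(partnerK x) mx_mv partnerK.
- move=> x /setU1P[->|xb]; first by rewrite setU11.
  rewrite in_setU1 negb_or => /andP[_ /(blue x xb)] /andP[dx dmx].
  by rewrite !(dominatedS (subsetUr [set m v] Vp)).
Qed.

End UnsafeSepyMove.

Lemma strategy_inv_dom_wins n (Vp Vb : {set T}) :
  uncoloured Vp Vb < n -> strategy_inv Vp Vb ->
  dom_wins e Dom Vp Vb /\ dom_wins e Sepy Vp Vb.
Proof.
elim: n Vp Vb => // n IH Vp Vb; rewrite ltnS => size_lt inv.
have nsepy := inv_not_sepy_term inv.
have [dterm | ndterm] := boolP (dom_term e Vp Vb); first by split; apply: dw_term.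
split.
  have [u undom] := exists_undominated nsepy ndterm.
  have legal_u := undominated_legal inv undom.
  apply: (dw_dom nsepy ndterm legal_u); apply: (IH _ _ _ _).2.
    exact: leq_trans (uncoloured_setU1p (legal_uncoloured legal_u)) size_lt.
  exact: undominated_move_inv.
apply: (dw_sepy nsepy ndterm (sepy_has_move nsepy ndterm)) => v legal_v.
have vcol := legal_uncoloured legal_v.
have size_v := leq_trans (uncoloured_setU1b vcol) size_lt.
have vp : v \notin Vp by move: vcol; rewrite inE negb_or => /andP[].
have [safe | ] := boolP ((m v \in Vp) || (dominated Vp v && dominated Vp (m v))).
  by apply: (IH _ _ size_v _).1; apply: safe_sepy_move_inv.
rewrite negb_or => /andP[mvp unsafe].
have nsepy' := unsafe_not_sepy_term inv vp unsafe.
have [dterm' | ndterm'] := boolP (dom_term e Vp (v |: Vb)); first exact: dw_term.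
have legal_mv := unsafe_reply_legal inv vp mvp unsafe.
apply: (dw_dom nsepy' ndterm' legal_mv); apply: (IH _ _ _ _).2.
  apply: leq_trans size_v; apply: ltnW.
  exact: uncoloured_setU1p (legal_uncoloured legal_mv).
exact: unsafe_reply_inv.
Qed.

End PairingStrategy.

Lemma perfect_matching_partner (T : finType) (e : rel T) (M : {set {set T}}) :
  simple_graph e -> perfect_matching e M ->
  exists m : T -> T, (forall x, e x (m x)) /\ involutive m.
Proof.
case=> e_sym e_irr [edges disj cov].
have matched x : exists y, e x y && ([set x; y] \in M).
  have /bigcupP[B BM xB] : x \in cover M by rewrite cov inE.
  have [a [b [eab defB]]] := edges B BM.
  move: xB; rewrite defB in_set2 => /orP[] /eqP ->.
    by exists b; rewrite eab -defB BM.
  by exists a; rewrite e_sym eab setUC -defB BM.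
pose m x := odflt x [pick y | e x y && ([set x; y] \in M)].
have partnerP x : e x (m x) && ([set x; m x] \in M).
  rewrite /m; case: pickP => [y //|none].
  by have [y] := matched x; rewrite none.
exists m; split=> [x|x]; first by case/andP: (partnerP x).
have /andP[_ Mx] := partnerP x; have /andP[e_mx Mmx] := partnerP (m x).
have sameB : [set x; m x] = [set m x; m (m x)].
  apply/eqP/negPn/negP => /(trivIsetP disj _ _ Mx Mmx) /disjointFr.
  by move/(_ (m x)); rewrite !in_set2 eqxx orbT => /(_ isT).
have : m (m x) \in [set x; m x] by rewrite sameB in_set2 eqxx orbT.
by rewrite in_set2 => /orP[/eqP // | /eqP mmx]; move: e_mx; rewrite mmx e_irr.
Qed.

Theorem proposition11 (T : finType) (e : rel T) :
  simple_graph e -> has_perfect_matching e ->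
  dom_wins e Sepy set0 set0 /\ dom_wins e Dom set0 set0.
Proof.
move=> G [M matching].
have [m [e_partner partnerK]] := perfect_matching_partner G matching.
have [e_sym e_irr] := G.
have inv0 : strategy_inv e m set0 set0 by split=> x; rewrite inE.
have size0 : uncoloured (set0 : {set T}) set0 < #|T|.+1 by rewrite ltnS max_card.
have [winD winS] := strategy_inv_dom_wins e_sym e_irr e_partner partnerK size0 inv0.
by split.
Qed.
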